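(* Let $\zeta(dx)=e^{-U(x)}dx$ be a probability measure on $\mathbb R^d$ with $U\in C^2(\mathbb R^d)$, and suppose there exist $\alpha_U>0$ and $\tilde g_U\in\tilde{\mathcal G}$ such that $\kappa_U(r)\ge\alpha_U-r^{-1}\tilde g_U(r)$ for all $r>0$. Then for every $\sigma\in(0,\alpha_U/2)$, $\int\exp(\sigma|x|^2)\,\zeta(dx)<+\infty$.
   Context: For differentiable $U:\mathbb R^d\to\mathbb R$ and $r>0$, $\kappa_U(r):=\inf\{\langle\nabla U(x)-\nabla U(y),x-y\rangle/|x-y|^2: x,y\in\mathbb R^d,\ |x-y|=r\}$. $\mathcal G$ is the set of $g\in C^2((0,\infty),[0,\infty))$ such that $r\mapsto r^{1/2}g(r^{1/2})$ is non-decreasing and concave and $\lim_{r\downarrow0}rg(r)=0$; $\tilde{\mathcal G}$ is the set of bounded $g\in\mathcal G$ with $\lim_{r\downarrow0}g(r)=0$, $g'\ge0$ and $2g''+gg'\le0$. *)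

From mathcomp Require Import all_boot all_order all_algebra.
From mathcomp Require Import all_classical all_reals all_analysis.
Set Implicit Arguments. Unset Strict Implicit. Unset Printing Implicit Defensive.
Import Order.TTheory GRing.Theory Num.Theory numFieldNormedType.Exports.
Local Open Scope classical_set_scope.
Local Open Scope ring_scope.

Section Defs.
Variable R : realType.

Definition dotv (d : nat) (x y : 'rV[R]_d) : R := \sum_(i < d) x 0 i * y 0 i.
Definition enorm2 (d : nat) (x : 'rV[R]_d) : R := dotv x x.
Definition enorm (d : nat) (x : 'rV[R]_d) : R := Num.sqrt (enorm2 x).

Definition partialD (d : nat) (i : 'I_d) (U : 'rV[R]_d -> R) (x : 'rV[R]_d) : R :=
  'D_(delta_mx 0 i) U x.
Definition grad (d : nat) (U : 'rV[R]_d -> R) (x : 'rV[R]_d) : 'rV[R]_d :=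
  \row_i partialD i U x.

Definition C2 (d : nat) (U : 'rV[R]_d -> R) : Prop :=
  (forall x, differentiable U x) /\
  (forall x, differentiable (grad U) x) /\
  (forall (i j : 'I_d), continuous (fun x : 'rV[R]_d => partialD j (partialD i U) x)).

Definition kappa (d : nat) (U : 'rV[R]_d -> R) (r : R) : \bar R :=
  ereal_inf [set z : \bar R | exists x y : 'rV[R]_d, enorm (x - y) = r /\
              z = ((dotv (grad U x - grad U y) (x - y)) / enorm2 (x - y))%:E].

Definition vcons (n : nat) (t : R) (v : 'rV[R]_n) : 'rV[R]_n.+1 :=
  \row_(i < n.+1) match unlift ord0 i with None => t | Some j => v 0 j end.

(* Lebesgue integral over R^n of a nonnegative function, as the iterated
   one-dimensional Lebesgue integral (equal to the integral w.r.t. the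
   n-dimensional Lebesgue measure for nonnegative measurable f, by Tonelli). *)
Fixpoint lebint (n : nat) : ('rV[R]_n -> \bar R) -> \bar R :=
  match n with
  | 0 => fun f => f 0
  | n'.+1 => fun f =>
      (\int[@lebesgue_measure R]_(t in [set: R]) lebint (fun v => f (vcons t v)))%E
  end.

Definition classG (g : R -> R) : Prop :=
  [/\ (forall r, 0 < r -> 0 <= g r),
      (forall r, 0 < r -> derivable g r 1 /\ derivable (derive1 g) r 1
                         /\ {for r, continuous (derive1n 2 g)}),
      (forall a b, 0 < a -> a <= b ->
         Num.sqrt a * g (Num.sqrt a) <= Num.sqrt b * g (Num.sqrt b)),
      (forall a b t, 0 < a -> 0 < b -> 0 <= t <= 1 ->
         t * (Num.sqrt a * g (Num.sqrt a)) + (1 - t) * (Num.sqrt b * g (Num.sqrt b))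
         <= Num.sqrt (t * a + (1 - t) * b) * g (Num.sqrt (t * a + (1 - t) * b)))
    & (r * g r) @[r --> 0^'+] --> 0].

Definition classGt (g : R -> R) : Prop :=
  [/\ classG g,
      (exists M, forall r, 0 < r -> g r <= M),
      g r @[r --> 0^'+] --> 0,
      (forall r, 0 < r -> 0 <= (derive1 g) r)
    & (forall r, 0 < r -> 2 * (derive1n 2 g) r + g r * (derive1 g) r <= 0)].

End Defs.

From mathcomp Require Import all_boot all_order all_algebra.
From mathcomp Require Import all_classical all_reals all_analysis.
From mathcomp Require Import ring lra.
Import Order.TTheory GRing.Theory Num.Theory numFieldNormedType.Exports.
Local Open Scope classical_set_scope.
Local Open Scope ring_scope.

Set Implicit Arguments. Unset Strict Implicit. Unset Printing Implicit Defensive.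

(* Only the bound [g~_U <= M] of the class [G~] matters (and, of [C2 U], only
   the differentiability of [U]): it turns the hypothesis on [kappa_U] into
   the one-sided estimate
   [<grad U z - grad U w, z - w> >= alpha |z - w|^2 - M |z - w|].
   Integrating it along the segment from [0] to [x] gives
   [U x >= U 0 + <grad U 0, x> + alpha |x|^2 / 2 - M |x|], and Young's
   inequality absorbs the linear terms into [delta |x|^2 / 2] for any
   [delta > 0].  With [delta = alpha / 2 - sigma], [exp (sigma |x|^2 - U x)] is
   then dominated by a multiple of the product of [d] centred Gaussian
   densities of variance [1 / delta], whose iterated integral is finite. *)

Section IteratedIntegral.
Variable R : realType.
Local Notation mu := (@lebesgue_measure R).

(* Unlike [ge0_le_integral], no measurability is required: over [setT] both
   integrals are suprema over the simple functions below the integrand. *)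
Lemma ge0_le_integralT d (T : measurableType d) (nu : {measure set T -> \bar R})
    (f g : T -> \bar R) :
  (forall t, (0 <= f t)%E) -> (forall t, (f t <= g t)%E) ->
  (\int[nu]_(t in [set: T]) f t <= \int[nu]_(t in [set: T]) g t)%E.
Proof.
move=> f0 fg; have g0 t : (0 <= g t)%E by apply: le_trans (fg t).
rewrite !ge0_integralTE //; apply: ereal_sup_le => _ [h hf <-].
by exists h => // x; apply: le_trans (fg x).
Qed.

Lemma lebint_ge0 n (f : 'rV[R]_n -> \bar R) :
  (forall x, (0 <= f x)%E) -> (0 <= lebint f)%E.
Proof.
elim: n f => [|n IH] f f0 /=; first exact: f0.
by apply: integral_ge0 => t _; apply: IH.
Qed.

Lemma le_lebint n (f g : 'rV[R]_n -> \bar R) :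
  (forall x, (0 <= f x)%E) -> (forall x, (f x <= g x)%E) ->
  (lebint f <= lebint g)%E.
Proof.
elim: n f g => [|n IH] f g f0 fg /=; first exact: fg.
by apply: ge0_le_integralT => t; [apply: lebint_ge0 | apply: IH].
Qed.

Lemma vcons_ord0 n t (v : 'rV[R]_n) : vcons t v 0 ord0 = t.
Proof. by rewrite /vcons mxE unlift_none. Qed.

Lemma vcons_lift n t (v : 'rV[R]_n) j : vcons t v 0 (lift ord0 j) = v 0 j.
Proof. by rewrite /vcons mxE liftK. Qed.

Lemma lebint_prod_density (p : R -> R) :
  mu.-integrable [set: R] (fun t => (p t)%:E) ->
  (\int[mu]_t (p t)%:E = 1)%E ->
  forall n c, lebint (fun v : 'rV[R]_n => (c * \prod_(i < n) p (v 0 i))%:E) = c%:E.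
Proof.
move=> ip p1; elim=> [|n IH] c /=; first by rewrite big_ord0 mulr1.
transitivity (\int[mu]_(t in [set: R]) (c%:E * (p t)%:E))%E.
  apply: eq_integral => t _; rewrite -EFinM -IH; congr lebint.
  apply: funext => v; rewrite big_ord_recl vcons_ord0 mulrA.
  by congr (_ * _)%:E; apply: eq_bigr => i _; rewrite vcons_lift.
by rewrite integralZl // p1 mule1.
Qed.

Lemma normal_pdf0_sqrtV (delta t : R) : 0 < delta ->
  normal_pdf 0 (Num.sqrt delta^-1) t =
  normal_peak (Num.sqrt delta^-1) * expR (- (delta / 2 * t ^+ 2)).
Proof.
move=> delta0; have s0 : Num.sqrt delta^-1 != 0.
  by rewrite gt_eqF // sqrtr_gt0 invr_gt0.
rewrite normal_pdfE //=; congr (_ * expR _).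
rewrite /normal_fun subr0 sqr_sqrtr ?invr_ge0 ?ltW //.
by field; rewrite gt_eqF.
Qed.

Lemma lebint_gaussian_dominated_lty n (f : 'rV[R]_n -> \bar R) (K delta : R) :
  0 < delta -> (forall x, (0 <= f x)%E) ->
  (forall x, (f x <= (K * expR (- (delta / 2 * enorm2 x)))%:E)%E) ->
  (lebint f < +oo)%E.
Proof.
move=> delta0 f0 fK; pose s := Num.sqrt delta^-1.
have peak0 : 0 < normal_peak s by rewrite normal_peak_gt0 // gt_eqF // sqrtr_gt0 invr_gt0.
pose c := K / normal_peak s ^+ n.
have gaussE x : K * expR (- (delta / 2 * enorm2 x)) =
    c * \prod_(i < n) normal_pdf 0 s (x 0 i).
  under eq_bigr do rewrite normal_pdf0_sqrtV //.
  rewrite big_split /= prodr_const card_ord -expR_sum /c mulrA divfK ?expf_neq0 ?gt_eqF //.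
  congr (_ * expR _); rewrite /enorm2 /dotv mulr_sumr -sumrN.
  by apply: eq_bigr => i _; rewrite expr2.
apply: (@le_lt_trans _ _ c%:E); last exact: ltry.
rewrite -(lebint_prod_density (@integrable_normal_pdf _ 0 s) (integral_normal_pdf 0 s) n c).
by apply: le_lebint => // x; rewrite -gaussE.
Qed.

End IteratedIntegral.

Section RealInequalities.
Variable R : realType.

Lemma young_sqr (a b c : R) : 0 < c -> a * b <= c / 4 * b ^+ 2 + a ^+ 2 / c.
Proof.
move=> c0; rewrite -subr_ge0.
have -> : c / 4 * b ^+ 2 + a ^+ 2 / c - a * b = (c / 2 * b - a) ^+ 2 / c.
  by field; rewrite gt_eqF.
by rewrite divr_ge0 ?sqr_ge0 ?ltW.
Qed.

Lemma ge_increment_derive1 (f : R -> R) (a b : R) :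
  (forall s, derivable f s 1) -> (forall s, 0 < s < 1 -> a + b * s <= derive1 f s) ->
  f 0 + a + b / 2 <= f 1.
Proof.
move=> df f'_ge; pose h := (f - a \*: id - (b / 2) \*: (id * id) : R -> R).
have h' s : is_derive s (1 : R) h (derive1 f s - a - b * s).
  have := derivableP (df s); rewrite -derive1E => ?.
  by apply: is_derive_eq; rewrite /GRing.scale /=; field.
have : h 0 <= h 1.
  apply: (@ger0_derive1_ndecr _ h 0 1) => //.
  - move=> s; rewrite in_itv /= => s01; rewrite derive1E derive_val.
    by have := f'_ge s s01; lra.
  - apply: continuous_subspaceT => s; apply: differentiable_continuous.
    by apply/derivable1_diffP; case: (h' s).
by rewrite /h !fctE /= !scaler0 mul0r scaler0 mulr1 /GRing.scale /=; lra.
Qed.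

End RealInequalities.

Section Euclidean.
Variables (R : realType) (n : nat).
Implicit Types (t : R) (x y z : 'rV[R]_n).

Lemma enorm2_ge0 x : 0 <= enorm2 x.
Proof. by apply: sumr_ge0 => i _; rewrite -expr2 sqr_ge0. Qed.

Lemma sqr_enorm x : enorm x ^+ 2 = enorm2 x.
Proof. by rewrite sqr_sqrtr // enorm2_ge0. Qed.

Lemma enorm2_eq0 x : (enorm2 x == 0) = (x == 0).
Proof.
apply/idP/eqP => [|->]; last first.
  by rewrite /enorm2 /dotv big1 // => i _; rewrite mxE mul0r.
rewrite /enorm2 /dotv psumr_eq0 => [/allP x0|i _]; last by rewrite -expr2 sqr_ge0.
apply/matrixP => i j; rewrite mxE (ord1 i).
by have /implyP/(_ isT) := x0 j (mem_index_enum _); rewrite mulf_eq0 orbb => /eqP.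
Qed.

Lemma enorm_eq0 x : (enorm x == 0) = (x == 0).
Proof. by rewrite sqrtr_eq0 le_eqVlt ltNge enorm2_ge0 orbF enorm2_eq0. Qed.

Lemma enorm2Z t x : enorm2 (t *: x) = t ^+ 2 * enorm2 x.
Proof. by rewrite /enorm2 /dotv mulr_sumr; apply: eq_bigr => i _; rewrite !mxE; ring. Qed.

Lemma enormZ t x : 0 <= t -> enorm (t *: x) = t * enorm x.
Proof. by move=> t0; rewrite /enorm enorm2Z sqrtrM ?sqr_ge0 // sqrtr_sqr ger0_norm. Qed.

Lemma dotvZr t x y : dotv x (t *: y) = t * dotv x y.
Proof. by rewrite /dotv mulr_sumr; apply: eq_bigr => i _; rewrite !mxE; ring. Qed.

Lemma dotvBl x y z : dotv (x - y) z = dotv x z - dotv y z.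
Proof. by rewrite /dotv -sumrB; apply: eq_bigr => i _; rewrite !mxE; ring. Qed.

Lemma dotv0r x : dotv x 0 = 0.
Proof. by rewrite /dotv big1 // => i _; rewrite mxE mulr0. Qed.

Lemma dotv_ge_young (u x : 'rV[R]_n) (c : R) : 0 < c ->
  - (c / 4 * enorm2 x + enorm2 u / c) <= dotv u x.
Proof.
move=> c0; rewrite lerNl /enorm2 /dotv -sumrN mulr_sumr mulr_suml -big_split /=.
by apply: ler_sum => i _; rewrite -mulNr -!expr2 -(sqrrN (u 0 i)) young_sqr.
Qed.

End Euclidean.

Section QuadraticGrowth.
Variables (R : realType) (d : nat) (U : 'rV[R]_d -> R).

Lemma kappa_ge_dotv_grad (alpha M : R) (g : R -> R) :
  (forall r, 0 < r -> g r <= M) ->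
  (forall r, 0 < r -> ((alpha - r^-1 * g r)%:E <= kappa U r)%E) ->
  forall z w, alpha * enorm2 (z - w) - M * enorm (z - w)
              <= dotv (grad U z - grad U w) (z - w).
Proof.
move=> gM kappa_ge z w; have [/eqP|] := eqVneq (enorm (z - w)) 0.
  rewrite enorm_eq0 => /eqP ->.
  have /eqP -> : enorm (0 : 'rV[R]_d) == 0 by rewrite enorm_eq0.
  have /eqP -> : enorm2 (0 : 'rV[R]_d) == 0 by rewrite enorm2_eq0.
  by rewrite dotv0r !mulr0 subrr.
rewrite -sqr_enorm => r_neq0; have r0 : 0 < enorm (z - w).
  by rewrite lt_neqAle eq_sym r_neq0 sqrtr_ge0.
have : ((alpha - (enorm (z - w))^-1 * g (enorm (z - w)))%:E <=
    (dotv (grad U z - grad U w) (z - w) / enorm (z - w) ^+ 2)%:E)%E.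
  apply: le_trans (kappa_ge _ r0) _; rewrite sqr_enorm.
  by apply: ereal_inf_lbound; exists z, w.
rewrite lee_fin ler_pdivlMr ?exprn_gt0 //; apply: le_trans.
set r := enorm (z - w) in r_neq0 r0 *.
have -> : (alpha - r^-1 * g r) * r ^+ 2 = alpha * r ^+ 2 - g r * r by field.
by rewrite lerB // ler_pM2r // gM.
Qed.

Hypothesis dU : forall x, differentiable U x.

Lemma diff_grad_dotv x v : 'd U x v = dotv (grad U x) v.
Proof.
rewrite [in LHS](row_sum_delta v) linear_sum /dotv; apply: eq_bigr => i _.
by rewrite linearZ /= mxE /partialD deriveE // mulrC.
Qed.

Lemma derive1_ray x t :
  derivable (fun s : R => U (s *: x)) t 1 /\
  derive1 (fun s : R => U (s *: x)) t = dotv (grad U (t *: x)) x.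
Proof.
have dray : differentiable (U \o ( *:%R^~ x)) t by apply: differentiable_comp.
split; first exact/derivable1_diffP.
by rewrite derive1E deriveE // diff_comp // diff_val /= scale1r diff_grad_dotv.
Qed.

Variables alpha M : R.
Hypothesis grad_mono : forall z w,
  alpha * enorm2 (z - w) - M * enorm (z - w) <= dotv (grad U z - grad U w) (z - w).

Lemma ge_quadratic_along_ray x :
  U 0 + dotv (grad U 0) x + alpha / 2 * enorm2 x - M * enorm x <= U x.
Proof.
pose f s := U (s *: x).
have : f 0 + (dotv (grad U 0) x - M * enorm x) + alpha * enorm2 x / 2 <= f 1.
  apply: ge_increment_derive1 => [s|s /andP[s0 _]]; first by case: (derive1_ray x s).
  have [_ ->] := derive1_ray x s.
  have := grad_mono (s *: x) 0; rewrite !subr0 enorm2Z (enormZ _ (ltW s0)) dotvZr dotvBl.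
  nra.
by rewrite /f scale0r scale1r; lra.
Qed.

Lemma ge_quadratic (delta : R) : 0 < delta -> forall x,
  U 0 - (enorm2 (grad U 0) + M ^+ 2) / delta + (alpha - delta) / 2 * enorm2 x <= U x.
Proof.
move=> delta0 x; have := ge_quadratic_along_ray x.
have := dotv_ge_young (grad U 0) x delta0.
have := young_sqr M (enorm x) delta0; rewrite sqr_enorm mulrDl.
lra.
Qed.

End QuadraticGrowth.

Theorem lemma31 (R : realType) (d : nat) (U : 'rV[R]_d -> R)
  (alphaU : R) (gU : R -> R) :
  C2 U ->
  lebint (fun x => (expR (- U x))%:E) = 1%E ->
  0 < alphaU ->
  classGt gU ->
  (forall r : R, 0 < r -> ((alphaU - r^-1 * gU r)%:E <= kappa U r)%E) ->
  forall sigma : R, 0 < sigma -> sigma < alphaU / 2 ->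
  (lebint (fun x => (expR (sigma * enorm2 x) * expR (- U x))%:E) < +oo)%E.
Proof.
move=> [dU _] _ _ [_ [M gM] _ _ _] kappa_ge sigma _ sigma_lt.
have delta0 : 0 < alphaU / 2 - sigma by rewrite subr_gt0.
have growth := ge_quadratic dU (kappa_ge_dotv_grad gM kappa_ge) delta0.
pose C := - U 0 + (enorm2 (grad U 0) + M ^+ 2) / (alphaU / 2 - sigma).
apply: (@lebint_gaussian_dominated_lty _ _ _ (expR C) _ delta0) => x.
  by rewrite lee_fin mulr_ge0 ?expR_ge0.
rewrite lee_fin -!expRD ler_expR /C; have := growth x; lra.
Qed.
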